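(* Let $q\geq 19$ and $n\geq 2^q/\binom{q}{\leq 2}$ be integers, and let $\Delta$ be defined (as in the context) for the $q$-round pathological liar game with $2$ lies and initial state $(n,0,0)$. Then $$\Delta=-A\binom{q-1}{2}-B\binom{q-2}{1},$$ where $A=n\bmod 2$ and $B=0$ if $n\equiv 0\pmod 4$, $B=2\cdot(q\bmod 2)$ if $n\equiv1\pmod 4$, $B=(1-q^3)\bmod 4$ if $n\equiv 2\pmod 4$, and $B=(1+q^3)\bmod 4$ if $n\equiv 3\pmod 4$. Furthermore, there is a choice of questions $\vec{a},\vec{b}^{Y},\vec{b}^{N}$ attaining the maximum defining $\Delta$ such that every possible state after the first two rounds has last coordinate (number of elements with $2$ lies) at least $(q-2)^2+\binom{q-2}{\leq 2}$.
   Context: Liar game with $2$ lies: a state is $\vec{x}=(x_0,x_1,x_2)$ of nonnegative integers; a legal question is $\vec{a}=(a_0,a_1,a_2)$ with integers $0\leq a_i\leq x_i$; the two possible next states are $Y(\vec{x},\vec{a})=(a_0,\,a_1+x_0-a_0,\,a_2+x_1-a_1)$ and $N(\vec{x},\vec{a})=(x_0-a_0,\,x_1-a_1+a_0,\,x_2-a_2+a_1)$. Weight: $wt_j(\vec{x})=x_0\binom{j}{\leq 2}+x_1\binom{j}{\leq 1}+x_2$, with $\binom{j}{\leq m}=\sum_{i=0}^m\binom{j}{i}$. Weight imbalance: $\Delta_j(\vec{x},\vec{a})=wt_j(Y(\vec{x},\vec{a}))-wt_j(N(\vec{x},\vec{a}))$. For the initial state $(n,0,0)$, Paul's first question is $\vec{a}$,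 and his second question is $\vec{b}^{Y}$ (legal for $Y((n,0,0),\vec{a})$) if Carole answered Y and $\vec{b}^{N}$ (legal for $N((n,0,0),\vec{a})$) if she answered N. Set $\Delta_{q-1}=\Delta_{q-1}((n,0,0),\vec{a})$, $\Delta^{Y}_{q-2}=\Delta_{q-2}(Y((n,0,0),\vec{a}),\vec{b}^{Y})$, $\Delta^{N}_{q-2}=\Delta_{q-2}(N((n,0,0),\vec{a}),\vec{b}^{N})$. Then $\Delta$ is defined as the maximum, over all such legal $\vec{a},\vec{b}^{Y},\vec{b}^{N}$ for which $\Delta_{q-1},\Delta^{Y}_{q-2},\Delta^{N}_{q-2}$ are all nonnegative, of $$\min\{\Delta_{q-1}+2\Delta^{Y}_{q-2},\ \Delta_{q-1}-2\Delta^{Y}_{q-2},\ -\Delta_{q-1}+2\Delta^{N}_{q-2},\ -\Delta_{q-1}-2\Delta^{N}_{q-2}\}.$$ ''$m\bmod 2$'', ''$m\bmod 4$'' denote least nonnegative residues. *)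

From mathcomp Require Import all_boot all_order all_algebra.
Set Implicit Arguments. Unset Strict Implicit. Unset Printing Implicit Defensive.
Import Order.TTheory GRing.Theory Num.Theory.
Local Open Scope ring_scope.

Definition triple := (nat * nat * nat)%type.
Definition c0 (x : triple) : nat := x.1.1.
Definition c1 (x : triple) : nat := x.1.2.
Definition c2 (x : triple) : nat := x.2.

Definition legal (x a : triple) : bool :=
  [&& (c0 a <= c0 x)%N, (c1 a <= c1 x)%N & (c2 a <= c2 x)%N].

Definition Yst (x a : triple) : triple :=
  (c0 a, (c1 a + (c0 x - c0 a))%N, (c2 a + (c1 x - c1 a))%N).
Definition Nst (x a : triple) : triple :=
  ((c0 x - c0 a)%N, ((c1 x - c1 a) + c0 a)%N, ((c2 x - c2 a) + c1 a)%N).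

Definition binom_le (j m : nat) : nat := \sum_(i < m.+1) 'C(j, i).

Definition wt (j : nat) (x : triple) : int :=
  (c0 x * binom_le j 2 + c1 x * binom_le j 1 + c2 x)%N%:Z.

Definition Delta (j : nat) (x a : triple) : int :=
  wt j (Yst x a) - wt j (Nst x a).

Definition init (n : nat) : triple := (n, 0%N, 0%N).

(* The triples (a, bY, bN) over which the maximum defining Delta is taken. *)
Definition admissible (q n : nat) (a bY bN : triple) : Prop :=
  [/\ legal (init n) a, legal (Yst (init n) a) bY & legal (Nst (init n) a) bN] /\
  [/\ 0 <= Delta q.-1 (init n) a,
      0 <= Delta q.-2 (Yst (init n) a) bY &
      0 <= Delta q.-2 (Nst (init n) a) bN].

Definition value (q n : nat) (a bY bN : triple) : int :=
  let D1 := Delta q.-1 (init n) a in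
  let DY := Delta q.-2 (Yst (init n) a) bY in
  let DN := Delta q.-2 (Nst (init n) a) bN in
  Num.min (Num.min (D1 + 2 * DY) (D1 - 2 * DY))
          (Num.min (- D1 + 2 * DN) (- D1 - 2 * DN)).

Definition Bcoef (q n : nat) : int :=
  match (n %% 4)%N with
  | 0%N => 0
  | 1%N => 2 * (q %% 2)%N%:Z
  | 2%N => ((1 - (q%:Z) ^+ 3) %% 4)%Z
  | _ => ((1 + (q%:Z) ^+ 3) %% 4)%Z
  end.

Definition Delta_formula (q n : nat) : int :=
  - ((n %% 2)%N%:Z * ('C(q.-1, 2))%:Z) - Bcoef q n * ('C(q.-2, 1))%:Z.

From mathcomp Require Import all_boot all_order all_algebra zify ring.
Import Order.TTheory GRing.Theory Num.Theory.
Set Implicit Arguments. Unset Strict Implicit. Unset Printing Implicit Defensive.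
Local Open Scope ring_scope.

(* The first question is necessarily (a0, 0, 0), with imbalance
   (2 a0 - n) C(q-1, 2), where 2 a0 - n >= 0 has the parity of n.  A
   second-round state is (x0, x1, 0), and there 2 Delta_{q-2} = (q-2) K with
   K = (2 b0 - x0)(q-3) + 2 (2 b1 - x1).  Whatever b is, K is congruent to
   x0 (q-3) + 2 x1 modulo 4 (q odd) or modulo 2 (q even), and the least
   nonnegative element of this class is attained by some b close to x/2; for
   the balanced state (floor(n/2), ceil(n/2), 0) it equals B.  The objective
   is min(D1 - 2 DY, -D1 - 2 DN) <= -D1 - (q-2) B, which is the claimed value
   when a0 = ceil(n/2) and far below it otherwise, and the balanced questions
   attain it.  Since n >= 2^q / C(q, <= 2) is huge compared with q^2, taking
   b close to x/2 leaves many elements with two lies in every final state. *)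

Lemma minrDB (R : realDomainType) (x y : R) :
  0 <= y -> Num.min (x + y) (x - y) = x - y.
Proof. by move=> y0; rewrite min_r // lerD2l (le_trans _ y0) // oppr_le0. Qed.

Lemma pow2_ge_quartic q : (19 <= q)%N -> (4 * q ^ 4 <= 2 ^ q)%N.
Proof.
elim: q => // q IH; rewrite leq_eqVlt => /orP[/eqP<- | hq]; first lia.
have : ((19 * q.+1) ^ 4 <= (20 * q) ^ 4)%N by rewrite leq_exp2r //; lia.
move: (IH hq); rewrite !expnMn (expnS 2).
move: (q.+1 ^ 4)%N (q ^ 4)%N (2 ^ q)%N; lia.
Qed.

Lemma binom_le2 j : binom_le j 2 = (1 + j + 'C(j, 2))%N.
Proof. by rewrite /binom_le !big_ord_recr big_ord0 /= bin0 bin1. Qed.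

Lemma pow2_ge_volume q : (19 <= q)%N ->
  ((4 * ((q - 2) ^ 2 + binom_le (q - 2) 2) + 4 * q) * binom_le q 2 <= 2 ^ q)%N.
Proof.
move=> hq; rewrite !binom_le2.
have e1 : (2 * 'C(q - 2, 2) + 5 * q = q * q + 6)%N.
  by rewrite -mul_bin_diag bin1; lia.
have e2 : (2 * 'C(q, 2) + q = q * q)%N by rewrite -mul_bin_diag bin1; lia.
have hX : (4 * ((q - 2) ^ 2 + (1 + (q - 2) + 'C(q - 2, 2))) + 4 * q <= 6 * (q * q))%N.
  lia.
have hS : (3 * (1 + q + 'C(q, 2)) <= 2 * (q * q))%N by lia.
apply: leq_trans (pow2_ge_quartic hq).
have -> : (q ^ 4 = (q * q) * (q * q))%N by ring.
have := leq_mul hX hS; move: (_ + 4 * q)%N (1 + q + _)%N (q * q)%N; lia.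
Qed.

Lemma DeltaE j x b : legal x b ->
  Delta j x b = ((2 * c0 b)%:Z - (c0 x)%:Z) * ('C(j, 2))%:Z
                + ((2 * c1 b)%:Z - (c1 x)%:Z) * j%:Z + ((2 * c2 b)%:Z - (c2 x)%:Z).
Proof.
case: x b => [[x0 x1] x2] [[b0 b1] b2].
rewrite /legal /Delta /wt /Yst /Nst /c0 /c1 /c2 /binom_le /=.
rewrite !big_ord_recr big_ord0 /= bin0 bin1.
case/and3P=> /subnKC <- /subnKC <- /subnKC <-.
rewrite !addKn !(PoszD, PoszM); ring.
Qed.

Lemma legal_initP n a :
  legal (init n) a -> exists2 a0, (a0 <= n)%N & a = (a0, 0%N, 0%N).
Proof.
case: a => [[a0 a1] a2]; rewrite /legal /c0 /c1 /c2 /= !leqn0.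
by case/and3P=> ha0 /eqP-> /eqP->; exists a0.
Qed.

Lemma Yst_init n a0 : Yst (init n) (a0, 0%N, 0%N) = (a0, n - a0, 0)%N.
Proof. by rewrite /Yst /c0 /c1 /c2 /= add0n. Qed.

Lemma Nst_init n a0 : Nst (init n) (a0, 0%N, 0%N) = (n - a0, a0, 0)%N.
Proof. by rewrite /Nst /c0 /c1 /c2 /= subn0 add0n. Qed.

Lemma Delta_init j n a0 : (a0 <= n)%N ->
  Delta j (init n) (a0, 0%N, 0%N) = ((2 * a0)%:Z - n%:Z) * ('C(j, 2))%:Z.
Proof.
move=> ha; rewrite DeltaE; last by rewrite /legal /c0 /c1 /c2 /= ha.
rewrite /c0 /c1 /c2 /=; ring.
Qed.

Definition red_imbalance (c : nat) (x b : triple) : int :=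
  ((2 * c0 b)%:Z - (c0 x)%:Z) * c%:Z + 2 * ((2 * c1 b)%:Z - (c1 x)%:Z).

Lemma Delta_red j x b : legal x b -> c2 x = 0%N ->
  2 * Delta j x b = j%:Z * red_imbalance j.-1 x b.
Proof.
move=> lb x2; rewrite DeltaE // /red_imbalance.
have hC : 2 * ('C(j, 2))%:Z = j%:Z * (j.-1)%:Z.
  have : (2 * 'C(j, 2) = j * j.-1)%N by rewrite -mul_bin_diag bin1.
  lia.
move: lb; rewrite /legal x2 leqn0 => /and3P[_ _ /eqP->].
rewrite mulrDr mulrDr [2 * (_ * _)]mulrCA hC; ring.
Qed.

Definition red_modulus (c : nat) : int := if odd c then 2 else 4.

Definition min_red_imbalance (c : nat) (x : triple) : int :=
  ((c0 x * c + 2 * c1 x)%N%:Z %% red_modulus c)%Z.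

Lemma red_imbalance_mod c x b :
  (red_modulus c %| red_imbalance c x b - (c0 x * c + 2 * c1 x)%N%:Z)%Z.
Proof.
rewrite /red_modulus /red_imbalance -(odd_double_half c).
case: (odd c) => /=; move: (c./2) => h; rewrite odd_double /=; lia.
Qed.

Lemma min_red_imbalance_bounds c x : 0 <= min_red_imbalance c x <= 3.
Proof. rewrite /min_red_imbalance /red_modulus; case: ifP => _; lia. Qed.

Lemma min_red_imbalance_le c x b :
  0 <= red_imbalance c x b -> min_red_imbalance c x <= red_imbalance c x b.
Proof.
have := red_imbalance_mod c x b.
rewrite /min_red_imbalance /red_modulus; case: ifP => _; lia.
Qed.

Lemma min_red_imbalance_attained c x0 x1 x2 M :
  (2 <= x0)%N -> (2 * M + 2 * c <= x1)%N -> let x := (x0, x1, x2) in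
  exists b, [/\ legal x b, red_imbalance c x b = min_red_imbalance c x,
              (M <= c2 (Yst x b))%N & (M <= c2 (Nst x b))%N].
Proof.
move=> hx0 hx1 x; have /andP[K0 K3] := min_red_imbalance_bounds c x.
set K := min_red_imbalance c x in K0 K3 *.
pose D b0 := K - red_imbalance c x (b0, 0%N, 0%N).
have DS b0 : D b0.+1 = D b0 - 2 * c%:Z by rewrite /D /red_imbalance /c0 /c1 /=; lia.
(* Raising b0 by one lowers [D b0] by 2 c, so one of two consecutive values
   of b0 makes [D b0] divisible by 4, and then b1 := D b0 / 4 hits K. *)
have [b0 [lo hi dvdD]] : exists b0, [/\ uphalf (c0 x) <= b0,
    b0 <= (uphalf (c0 x)).+1 & (4 %| D b0)%Z]%N.
  have gD b0 : (red_modulus c %| D b0)%Z.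
    have := red_imbalance_mod c x (b0, 0%N, 0%N).
    rewrite /D /K /min_red_imbalance /red_modulus; case: ifP => _; lia.
  set h := uphalf (c0 x); have := gD h; have := DS h.
  have := odd_double_half c; rewrite /red_modulus; case: (odd c) => /= hc Dh gh.
  - have [d4|nd4] := boolP (4 %| D h)%Z; first by exists h; rewrite leqnSn.
    by exists h.+1; rewrite leqnn; split => //; lia.
  - by exists h; rewrite leqnSn.
have [k Dk] := dvdzP dvdD.
have s03 : 0 <= (2 * b0)%:Z - (c0 x)%:Z <= 3 by lia.
have sc : 0 <= ((2 * b0)%:Z - (c0 x)%:Z) * c%:Z <= 3 * c%:Z by nia.
move: Dk hx0 hx1 lo hi s03 sc; rewrite /D /red_imbalance /c0 /c1 /c2 /=.
exists (b0, `|k|%N, 0%N); rewrite /legal /Yst /Nst /red_imbalance /c0 /c1 /c2 /=.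
split; lia.
Qed.



Lemma BcoefE q n : (3 <= q)%N ->
  Bcoef q n = min_red_imbalance (q - 3) (n./2, uphalf n, 0%N).
Proof.
move=> hq; rewrite /Bcoef /min_red_imbalance /red_modulus /c0 /c1 /=.
have [k [nu [-> hnu]]] : exists k nu, n = (4 * k + nu)%N /\ (nu < 4)%N.
  by exists (n %/ 4)%N, (n %% 4)%N; rewrite ltn_mod; split; lia.
have [r [rho [-> hrho]]] : exists r rho, q = (4 * r + rho + 3)%N /\ (rho < 4)%N.
  by exists ((q - 3) %/ 4)%N, ((q - 3) %% 4)%N; rewrite ltn_mod; split; lia.
have -> : ((4 * k + nu) %% 4 = nu)%N by lia.
have -> : ((4 * k + nu)./2 = 2 * k + nu./2)%N by lia.
have -> : (uphalf (4 * k + nu) = 2 * k + uphalf nu)%N by lia.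
rewrite addnK oddD oddM andFb !exprS expr0.
by case: nu hnu => [|[|[|[|//]]]] _; case: rho hrho => [|[|[|[|//]]]] _ /=; lia.
Qed.





Lemma value_le_Delta_formula q n a bY bN : (19 <= q)%N ->
  admissible q n a bY bN -> value q n a bY bN <= Delta_formula q n.
Proof.
move=> hq [[/legal_initP[a0 ha0 ->] _ lN] [h1 hY hN]].
rewrite /value !minrDB ?mulr_ge0 // ge_min; apply/orP; right.
move: lN h1 hN; rewrite Nst_init Delta_init // => lN h1 hN.
have := Delta_red q.-2 lN erefl; have -> : (q.-2).-1 = (q - 3)%N by lia.
move=> DNE; have KN0 : 0 <= red_imbalance (q - 3) (n - a0, a0, 0)%N bN by nia.
have KNB : a0 = uphalf n -> Bcoef q n <= red_imbalance (q - 3) (n - a0, a0, 0)%N bN.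
  move=> a0E; move: KN0; rewrite a0E (_ : n - uphalf n = n./2)%N; last by lia.
  by rewrite BcoefE; [exact: min_red_imbalance_le | lia].
move: KNB KN0 DNE; set KN := red_imbalance _ _ _ => KNB KN0 DNE.
have cc2 : (2 * 'C(q.-1, 2) = q.-1 * q.-2)%N by rewrite -mul_bin_diag bin1.
have [B0 B3] := andP (min_red_imbalance_bounds (q - 3) (n./2, uphalf n, 0%N)).
rewrite -BcoefE in B0 B3; last by lia.
rewrite DNE /Delta_formula bin1.
have cc0 : 0 < 'C(q.-1, 2)%:Z by rewrite ltz_nat bin_gt0; lia.
have u0 : 0 <= (2 * a0)%N%:Z - n%:Z by rewrite -(pmulr_lge0 _ cc0).
have [a0E | a0gt] := eqVneq a0 (uphalf n).
  have -> : (2 * a0)%N%:Z - n%:Z = (n %% 2)%N by lia.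
  have := ler_wpM2l (isT : 0 <= q.-2%:Z) (KNB a0E); lia.
(* 2 a0 - n has the parity of n, and 2 C(q-1, 2) = (q-1)(q-2) >= 3 (q-2). *)
have : (n %% 2)%N%:Z + 2 <= (2 * a0)%N%:Z - n%:Z by lia.
nia.
Qed.

Lemma balanced_questions q n : (19 <= q)%N ->
  let m := ((q - 2) ^ 2 + binom_le (q - 2) 2)%N in
  (4 * m + 4 * q <= n)%N ->
  exists a bY bN : triple,
    [/\ admissible q n a bY bN,
        Delta_formula q n <= value q n a bY bN &
        let x1 := Yst (init n) a in
        let x2 := Nst (init n) a in
        [/\ (m <= c2 (Yst x1 bY))%N, (m <= c2 (Nst x1 bY))%N,
            (m <= c2 (Yst x2 bN))%N & (m <= c2 (Nst x2 bN))%N]].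
Proof.
move=> hq m hn; set a := (uphalf n, 0%N, 0%N).
have xYE : Yst (init n) a = (uphalf n, n./2, 0)%N.
  by rewrite Yst_init (_ : n - uphalf n = n./2)%N //; lia.
have xNE : Nst (init n) a = (n./2, uphalf n, 0)%N.
  by rewrite Nst_init (_ : n - uphalf n = n./2)%N //; lia.
have half_le : (n./2 <= uphalf n)%N by lia.
have hx0 : (2 <= n./2)%N by lia.
have hx1 : (2 * m + 2 * (q - 3) <= n./2)%N by lia.
have [bY [lY KYE cY1 cY2]] := min_red_imbalance_attained 0 (leq_trans hx0 half_le) hx1.
have [bN [lN KNE cN1 cN2]] := min_red_imbalance_attained 0 hx0 (leq_trans hx1 half_le).
exists a, bY, bN; rewrite /admissible /value xYE xNE.
have D1E : Delta q.-1 (init n) a = (n %% 2)%N%:Z * ('C(q.-1, 2))%:Z.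
  by rewrite Delta_init; [congr (_ * _); lia | lia].
have KY0 := min_red_imbalance_bounds (q - 3) (uphalf n, n./2, 0)%N.
have KYB : ~~ odd n -> min_red_imbalance (q - 3) (uphalf n, n./2, 0)%N = Bcoef q n.
  by move=> ev; rewrite BcoefE ?uphalf_half ?(negbTE ev) //; lia.
have [B0 B3] := andP (min_red_imbalance_bounds (q - 3) (n./2, uphalf n, 0%N)).
rewrite -BcoefE in B0 B3; last by lia.
have := Delta_red q.-2 lY erefl; have := Delta_red q.-2 lN erefl.
rewrite (_ : (q.-2).-1 = q - 3)%N; last by lia.
rewrite KYE KNE -BcoefE; last by lia.
move: KY0 KYB; set KY := min_red_imbalance _ _ => /andP[KY0 KY3] KYB DNE DYE.
have cc2 : (2 * 'C(q.-1, 2) = q.-1 * q.-2)%N by rewrite -mul_bin_diag bin1.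
have DY0 : 0 <= Delta q.-2 (uphalf n, n./2, 0)%N bY by nia.
have DN0 : 0 <= Delta q.-2 (n./2, uphalf n, 0)%N bN by nia.
split; last by split.
  split; last by rewrite D1E; split.
  by split=> //; rewrite /legal /c0 /c1 /c2 /=; lia.
rewrite !minrDB ?mulr_ge0 // le_min D1E /Delta_formula bin1 DYE DNE.
apply/andP; split; last by lia.
rewrite modn2; case: (odd n) KYB => [_ | -> //] /=; last by lia.
nia.
Qed.

Theorem lemma15 (q n : nat) (hq : (19 <= q)%N)
    (hn : (2 ^ q <= n * binom_le q 2)%N) :
  (forall a bY bN : triple, admissible q n a bY bN ->
      value q n a bY bN <= Delta_formula q n) /\
  (exists a bY bN : triple,
      [/\ admissible q n a bY bN,
          value q n a bY bN = Delta_formula q n &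
          let x1 := Yst (init n) a in
          let x2 := Nst (init n) a in
          let m := ((q - 2) ^ 2 + binom_le (q - 2) 2)%N in
          [/\ (m <= c2 (Yst x1 bY))%N, (m <= c2 (Nst x1 bY))%N,
              (m <= c2 (Yst x2 bN))%N & (m <= c2 (Nst x2 bN))%N]]).
Proof.
have n_large : (4 * ((q - 2) ^ 2 + binom_le (q - 2) 2) + 4 * q <= n)%N.
  have b_pos : (0 < binom_le q 2)%N by rewrite binom_le2.
  by rewrite -(leq_pmul2r b_pos) (leq_trans (pow2_ge_volume hq)).
have [a [bY [bN [adm le_value coords]]]] := balanced_questions hq n_large.
split=> [a' bY' bN'|]; first exact: value_le_Delta_formula.
exists a, bY, bN; split=> //.
by apply/le_anti; rewrite le_value value_le_Delta_formula.
Qed.
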